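(* Let $f:\mathbb{R}^n\to(-\infty,\infty]$ be a function, let $(\bar x,\bar x^* )\in\operatorname{gph}\partial f$, let $g:\mathbb{R}^n\to\mathbb{R}$ be twice continuously differentiable and put $h:=f+g$. Let \[\bar A=\begin{pmatrix} I&0\\ \nabla^2 g(\bar x)& I\end{pmatrix}\in\mathbb{R}^{2n\times 2n}.\] Then, writing $\bar y^*:=\bar x^*+\nabla g(\bar x)$, \begin{align*} &T^h_{\operatorname{gph}\partial h}(\bar x,\bar y^* )=\bar A\,T^f_{\operatorname{gph}\partial f}(\bar x,\bar x^* ),\\ &\widehat N^h_{\operatorname{gph}\partial h}(\bar x,\bar y^* )=\bar A^{-T}\widehat N^f_{\operatorname{gph}\partial f}(\bar x,\bar x^* ),\qquad N^h_{\operatorname{gph}\partial h}(\bar x,\bar y^* )=\bar A^{-T} N^f_{\operatorname{gph}\partial f}(\bar x,\bar x^* ),\\ &\operatorname{gph} D_h(\partial h)(\bar x,\bar y^* )=\bar A\,\operatorname{gph} D_f(\partial f)(\bar x,\bar x^* ),\\ &\operatorname{gph} \widehat D^*_h(\partial h)(\bar x,\bar y^* )=\bar A\,\operatorname{gph} \widehat D^*_f(\partial f)(\bar x,\bar x^* ),\qquad \operatorname{gph} D^*_h(\partial h)(\bar x,\bar y^* )=\bar A\,\operatorname{gph} D^*_f(\partial f)(\bar x,\bar x^* ),\\ &\mathcal{S}_h(\partial h)(\bar x,\bar y^* )=\{\bar A L\mid L\in \mathcal{S}_f(\partial f)(\bar x,\bar x^* )\},\qquad \mathcal{S}^*_h(\partial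 h)(\bar x,\bar y^* )=\{\bar A L^*\mid L\in \mathcal{S}_f(\partial f)(\bar x,\bar x^* )\}. \end{align*}
   Context: For a function $\varphi:\mathbb{R}^n\to(-\infty,\infty]$ finite at $x$, the regular subdifferential is $\widehat\partial\varphi(x)=\{x^*\mid \liminf_{y\to x}\frac{\varphi(y)-\varphi(x)-\langle x^*,y-x\rangle}{\|y-x\|}\ge 0\}$, and the (limiting) subdifferential $\partial\varphi(x)$ is the set of $x^*$ for which there exist $x_k\to x$ with $\varphi(x_k)\to\varphi(x)$ and $x_k^*\to x^*$, $x_k^*\in\widehat\partial\varphi(x_k)$. We write $(x_k,x_k^* )\xrightarrow{\varphi}(x,x^* )$ ($\varphi$-attentive convergence in $\operatorname{gph}\partial\varphi$) if $(x_k,x_k^* )\in\operatorname{gph}\partial\varphi$, $(x_k,x_k^* )\to(x,x^* )$ and $\varphi(x_k)\to\varphi(x)$. For $(x,x^* )\in\operatorname{gph}\partial\varphi$: - the $\varphi$-attentive tangent cone $T^\varphi_{\operatorname{gph}\partial\varphi}(x,x^* )$ is the set of $(u,u^* )$ such that there exist $t_k\downarrow0$ and $(x_k,x_k^* )\xrightarrow{\varphi}(x,x^* )$ with $(u,u^* )=\lim_k ((x_k,x_k^* )-(x,x^* ))/t_k$; - $\widehat N^\varphi_{\operatorname{gph}\partial\varphi}(x,x^* )$ is the polar cone of $T^\varphi_{\operatorname{gph}\partial\varphi}(x,x^* )$, and $N^\varphi_{\operatorname{gph}\partial\varphi}(x,x^* )$ is the set of limits of sequences $(v_k)$ with $v_k\in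 \widehat N^\varphi_{\operatorname{gph}\partial\varphi}(x_k,x_k^* )$ for some $(x_k,x_k^* )\xrightarrow{\varphi}(x,x^* )$; - $\operatorname{gph}D_\varphi(\partial\varphi)(x,x^* )=T^\varphi_{\operatorname{gph}\partial\varphi}(x,x^* )$, $\operatorname{gph}\widehat D^*_\varphi(\partial\varphi)(x,x^* )=\{(u,u^* )\mid (u^*,-u)\in \widehat N^\varphi_{\operatorname{gph}\partial\varphi}(x,x^* )\}$, $\operatorname{gph}D^*_\varphi(\partial\varphi)(x,x^* )=\{(u,u^* )\mid (u^*,-u)\in N^\varphi_{\operatorname{gph}\partial\varphi}(x,x^* )\}$; - $\mathcal Z_{nn}$ is the set of $n$-dimensional subspaces of $\mathbb{R}^n\times\mathbb{R}^n$ with metric $d(L_1,L_2)=\|P_{L_1}-P_{L_2}\|$ ($P_L$ orthogonal projection onto $L$); for $L\in\mathcal Z_{nn}$ the adjoint subspace is $L^*=\{(v^*,u^* )\mid (u^*,-v^* )\in L^\perp\}$; - $\mathcal O^\varphi_{\partial\varphi}$ is the set of $(x,x^* )\in\operatorname{gph}\partial\varphi$ with $T^\varphi_{\operatorname{gph}\partial\varphi}(x,x^* )\in\mathcal Z_{nn}$; the $\varphi$-attentive SC derivative $\mathcal S_\varphi(\partial\varphi)(x,x^* )$ is the set of $L\in\mathcal Z_{nn}$ for which there are $(x_k,x_k^* )\in\mathcal O^\varphi_{\partial\varphi}$ with $(x_k,x_k^* )\xrightarrow{\varphi}(x,x^* )$ and $d(L,T^\varphi_{\operatorname{gph}\partial\varphi}(x_k,x_k^*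 ))\to 0$; and $\mathcal S^*_\varphi(\partial\varphi)(x,x^* )=\{L^*\mid L\in\mathcal S_\varphi(\partial\varphi)(x,x^* )\}$. These are applied with $\varphi=f$ and $\varphi=h$. $A^{-T}$ denotes $(A^T)^{-1}$. *)

(* MathComp + MathComp-Analysis, over an abstract R : realType.
   R^n is modelled by column vectors 'cV[R]_n, R^n x R^n by 'cV[R]_(n+n)
   (a pair (x, x^* ) is col_mx x xs. *)
From HB Require Import structures.
From mathcomp Require Import all_boot all_order all_algebra.
From mathcomp Require Import all_classical all_reals all_analysis.
Set Implicit Arguments. Unset Strict Implicit. Unset Printing Implicit Defensive.
Import Order.TTheory GRing.Theory Num.Theory.
Import numFieldNormedType.Exports.
Local Open Scope classical_set_scope.
Local Open Scope ring_scope.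

Definition dotv (R : realType) (m : nat) (u v : 'cV[R]_m) : R :=
  \sum_(i < m) u i 0 * v i 0.
Definition enorm (R : realType) (m : nat) (u : 'cV[R]_m) : R :=
  Num.sqrt (dotv u u).

(* regular subdifferential; the condition "liminf_{y->x} ratio >= 0"
   written out in epsilon-delta form *)
Definition reg_subdiff (R : realType) (n : nat) (phi : 'cV[R]_n -> \bar R)
  (x : 'cV[R]_n) : set 'cV[R]_n :=
  [set xs | phi x \is a fin_num /\
    forall eps : R, 0 < eps -> exists2 delta : R, 0 < delta &
      forall y : 'cV[R]_n, 0 < enorm (y - x) < delta ->
        (phi x + (dotv xs (y - x) - eps * enorm (y - x))%:E <= phi y)%E].

Definition lim_subdiff (R : realType) (n : nat) (phi : 'cV[R]_n -> \bar R)
  (x : 'cV[R]_n) : set 'cV[R]_n :=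
  [set xs | phi x \is a fin_num /\
    exists (xk xsk : nat -> 'cV[R]_n),
      [/\ xk @ \oo --> x, (fun k => phi (xk k)) @ \oo --> phi x,
          xsk @ \oo --> xs & forall k, reg_subdiff phi (xk k) (xsk k)]].

Definition gph_sd (R : realType) (n : nat) (phi : 'cV[R]_n -> \bar R)
  : set 'cV[R]_(n + n) :=
  [set z | lim_subdiff phi (usubmx z) (dsubmx z)].

Definition att_conv (R : realType) (n : nat) (phi : 'cV[R]_n -> \bar R)
  (zk : nat -> 'cV[R]_(n + n)) (z : 'cV[R]_(n + n)) : Prop :=
  [/\ forall k, gph_sd phi (zk k), zk @ \oo --> z &
      (fun k => phi (usubmx (zk k))) @ \oo --> phi (usubmx z)].

Definition att_tangent (R : realType) (n : nat) (phi : 'cV[R]_n -> \bar R)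
  (z : 'cV[R]_(n + n)) : set 'cV[R]_(n + n) :=
  [set w | exists (tk : nat -> R) (zk : nat -> 'cV[R]_(n + n)),
     [/\ forall k, 0 < tk k, tk @ \oo --> 0, att_conv phi zk z &
         (fun k => (tk k)^-1 *: (zk k - z)) @ \oo --> w]].

Definition att_rnormal (R : realType) (n : nat) (phi : 'cV[R]_n -> \bar R)
  (z : 'cV[R]_(n + n)) : set 'cV[R]_(n + n) :=
  [set v | forall w, att_tangent phi z w -> dotv v w <= 0].

Definition att_normal (R : realType) (n : nat) (phi : 'cV[R]_n -> \bar R)
  (z : 'cV[R]_(n + n)) : set 'cV[R]_(n + n) :=
  [set v | exists (zk vk : nat -> 'cV[R]_(n + n)),
     [/\ att_conv phi zk z, vk @ \oo --> v &
         forall k, att_rnormal phi (zk k) (vk k)]].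

Definition swapneg (R : realType) (n : nat) (w : 'cV[R]_(n + n)) : 'cV[R]_(n + n) :=
  col_mx (dsubmx w) (- usubmx w).

Definition gph_D (R : realType) (n : nat) (phi : 'cV[R]_n -> \bar R)
  (z : 'cV[R]_(n + n)) : set 'cV[R]_(n + n) := att_tangent phi z.
Definition gph_rDstar (R : realType) (n : nat) (phi : 'cV[R]_n -> \bar R)
  (z : 'cV[R]_(n + n)) : set 'cV[R]_(n + n) :=
  [set w | att_rnormal phi z (swapneg w)].
Definition gph_Dstar (R : realType) (n : nat) (phi : 'cV[R]_n -> \bar R)
  (z : 'cV[R]_(n + n)) : set 'cV[R]_(n + n) :=
  [set w | att_normal phi z (swapneg w)].

Definition is_Znn (R : realType) (n : nat) (L : set 'cV[R]_(n + n)) : Prop :=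
  exists M : 'M[R]_(n + n, n), \rank M = n /\ L = [set M *m c | c in [set: 'cV[R]_n]].

(* orthogonal projection matrix onto L (meaningful when L is a subspace) *)
Definition proj_mx (R : realType) (m : nat) (L : set 'cV[R]_m) : 'M[R]_m :=
  xget 0 [set P : 'M[R]_m | [/\ P^T = P, P *m P = P &
                               [set P *m z | z in [set: 'cV[R]_m]] = L]].

Definition opnorm (R : realType) (m : nat) (M : 'M[R]_m) : R :=
  sup [set enorm (M *m z) | z in [set z : 'cV[R]_m | enorm z <= 1]].

Definition dZ (R : realType) (m : nat) (L1 L2 : set 'cV[R]_m) : R :=
  opnorm (proj_mx L1 - proj_mx L2).

Definition O_set (R : realType) (n : nat) (phi : 'cV[R]_n -> \bar R)
  : set 'cV[R]_(n + n) :=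
  [set z | gph_sd phi z /\ is_Znn (att_tangent phi z)].

Definition SC (R : realType) (n : nat) (phi : 'cV[R]_n -> \bar R)
  (z : 'cV[R]_(n + n)) : set (set 'cV[R]_(n + n)) :=
  [set L | is_Znn L /\ exists zk : nat -> 'cV[R]_(n + n),
     [/\ forall k, O_set phi (zk k), att_conv phi zk z &
         (fun k => dZ L (att_tangent phi (zk k))) @ \oo --> (0 : R)]].

Definition adjoint (R : realType) (n : nat) (L : set 'cV[R]_(n + n))
  : set 'cV[R]_(n + n) :=
  [set w | forall v, L v -> dotv (swapneg w) v = 0].

Definition SCstar (R : realType) (n : nat) (phi : 'cV[R]_n -> \bar R)
  (z : 'cV[R]_(n + n)) : set (set 'cV[R]_(n + n)) :=
  (@adjoint R n) @` SC phi z.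

Definition C2_with (R : realType) (n : nat) (g : 'cV[R]_n -> R)
  (G : 'cV[R]_n -> 'cV[R]_n) (H : 'cV[R]_n -> 'M[R]_n) : Prop :=
  [/\ forall x, differentiable g x /\ ('d g x : 'cV[R]_n -> R) =1 dotv (G x),
      forall x, differentiable G x /\
                ('d G x : 'cV[R]_n -> 'cV[R]_n) =1 (fun v => H x *m v) &
      continuous H].

(* The map (x, x^* ) |-> (x, x^* + grad g(x)) carries gph (df) into gph (dh),
   f-attentive sequences to h-attentive ones (sum rule for a C^2 perturbation),
   and its difference quotients converge to those of the linear map
   A = [[I, 0], [grad^2 g(x), I]]; applied to h and -g it gives the inverse
   map, so tangent cones transform by A.  Regular normals are polars of
   tangent cones and hence transform by A^-T, limiting normals are limits of
   these, and SC derivatives transform by A because the projection onto M L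
   depends continuously on M and on the projection onto L.  Finally
   A^T J A = J for the symplectic matrix J behind (u, u^* ) |-> (u^*, -u),
   by symmetry of the Hessian, which yields the statements on coderivatives
   and adjoint subspaces. *)

From Pilot Require Import Defs.
From HB Require Import structures.
From mathcomp Require Import all_boot all_order all_algebra.
From mathcomp Require Import all_classical all_reals all_analysis.
From mathcomp Require Import lra ring.
Import Order.TTheory GRing.Theory Num.Theory.
Import numFieldNormedType.Exports.
Local Open Scope classical_set_scope.
Local Open Scope ring_scope.
Set Implicit Arguments. Unset Strict Implicit. Unset Printing Implicit Defensive.

Section Euclid.
Variable R : realType.
Implicit Types m : nat.

Lemma dotvE m (u v : 'cV[R]_m) : dotv u v = (u^T *m v) 0 0.
Proof. by rewrite /dotv mxE; apply: eq_bigr => i _; rewrite mxE. Qed.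

Lemma dotvC m (u v : 'cV[R]_m) : dotv u v = dotv v u.
Proof. by apply: eq_bigr => i _; rewrite mulrC. Qed.

Lemma dotv_mulmx m k (M : 'M[R]_(m, k)) (u : 'cV[R]_k) (v : 'cV[R]_m) :
  dotv (M *m u) v = dotv u (M^T *m v).
Proof. by rewrite !dotvE trmx_mul mulmxA. Qed.

Lemma dotvDl m (u w v : 'cV[R]_m) : dotv (u + w) v = dotv u v + dotv w v.
Proof. by rewrite !dotvE linearD mulmxDl mxE. Qed.

Lemma dotvZl m a (u v : 'cV[R]_m) : dotv (a *: u) v = a * dotv u v.
Proof. by rewrite !dotvE linearZ -scalemxAl mxE. Qed.

Lemma dotvNl m (u v : 'cV[R]_m) : dotv (- u) v = - dotv u v.
Proof. by rewrite -scaleN1r dotvZl mulN1r. Qed.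

Lemma dotvBl m (u w v : 'cV[R]_m) : dotv (u - w) v = dotv u v - dotv w v.
Proof. by rewrite dotvDl dotvNl. Qed.

Lemma dotvDr m (u w v : 'cV[R]_m) : dotv v (u + w) = dotv v u + dotv v w.
Proof. by rewrite dotvC dotvDl !(dotvC v). Qed.

Lemma dotv0r m (v : 'cV[R]_m) : dotv v 0 = 0.
Proof. by rewrite dotvE mulmx0 mxE. Qed.

Lemma dotvv_ge0 m (u : 'cV[R]_m) : 0 <= dotv u u.
Proof. by apply: sumr_ge0 => i _; rewrite -expr2 sqr_ge0. Qed.

Lemma dotvv_eq0 m (u : 'cV[R]_m) : dotv u u = 0 -> u = 0.
Proof.
move/psumr_eq0P => u0; apply/matrixP => i j; rewrite ord1 mxE.
by apply/eqP; rewrite -sqrf_eq0 expr2 u0 // => k _; rewrite -expr2 sqr_ge0.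
Qed.

Lemma dotv_delta m (i : 'I_m) (w : 'cV[R]_m) : dotv (delta_mx i 0) w = w i 0.
Proof.
rewrite /dotv (bigD1 i) //= !mxE !eqxx mul1r big1 ?addr0 // => k /negbTE ki.
by rewrite mxE ki mul0r.
Qed.

Lemma enorm_ge0 m (u : 'cV[R]_m) : 0 <= enorm u.
Proof. exact: sqrtr_ge0. Qed.

Lemma enorm0 m : enorm (0 : 'cV[R]_m) = 0.
Proof. by rewrite /enorm dotv0r sqrtr0. Qed.

Lemma enorm_delta m (j : 'I_m) : enorm (delta_mx j 0 : 'cV[R]_m) = 1.
Proof. by rewrite /enorm dotv_delta mxE !eqxx sqrtr1. Qed.

Lemma coord_le_enorm m (u : 'cV[R]_m) i : `|u i 0| <= enorm u.
Proof.
rewrite /enorm -sqrtr_sqr ler_sqrt ?dotvv_ge0 // /dotv (bigD1 i) //= expr2 lerDl.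
by apply: sumr_ge0 => j _; rewrite -expr2 sqr_ge0.
Qed.

Lemma mxnorm_coord_le p q (M : 'M[R]_(p, q)) i j : `|M i j| <= `|M|.
Proof.
change (`|M i j| <= mx_norm M); rewrite mx_normrE.
exact: (le_bigmax _ (fun ij : 'I_p * 'I_q => `|M ij.1 ij.2|) (i, j)).
Qed.

Lemma mxnorm_le p q (M : 'M[R]_(p, q)) (c : R) :
  0 <= c -> (forall i j, `|M i j| <= c) -> `|M| <= c.
Proof.
move=> c0 Mc; change (mx_norm M <= c); rewrite mx_normrE.
by apply: bigmax_le => // -[i j] _; exact: Mc.
Qed.

Lemma mxnorm_le_enorm m (u : 'cV[R]_m) : `|u| <= enorm u.
Proof.
apply: mxnorm_le; first exact: enorm_ge0.
by move=> i j; rewrite ord1; exact: coord_le_enorm.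
Qed.

Lemma enorm_le_mxnorm m (u : 'cV[R]_m) : enorm u <= m%:R * `|u|.
Proof.
have m_u_ge0 : 0 <= m%:R * `|u| by rewrite mulr_ge0.
rewrite /enorm -(ger0_norm m_u_ge0) -sqrtr_sqr ler_sqrt ?sqr_ge0 //.
apply: (@le_trans _ _ (\sum_(i < m) `|u| ^+ 2)).
  apply: ler_sum => i _; rewrite -expr2 -real_normK ?num_real //.
  by rewrite lerXn2r ?nnegrE ?normr_ge0 // mxnorm_coord_le.
rewrite sumr_const card_ord exprMn [X in _ <= X]mulrC -[X in X <= _]mulr_natr.
apply: ler_wpM2l; first exact: sqr_ge0.
by rewrite -natrX ler_nat; case: m {u m_u_ge0} => // m; rewrite expnS leq_pmulr.
Qed.

Lemma dotv_le m (u v : 'cV[R]_m) : `|dotv u v| <= m%:R * (`|u| * `|v|).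
Proof.
rewrite /dotv (le_trans (ler_norm_sum _ _ _)) //.
apply: le_trans (_ : _ <= \sum_(i < m) `|u| * `|v|) _.
  by apply: ler_sum => i _; rewrite normrM ler_pM ?normr_ge0 ?mxnorm_coord_le.
by rewrite sumr_const card_ord mulr_natl.
Qed.

Lemma mxnorm_mulmx_le p q r (A : 'M[R]_(p, q)) (B : 'M[R]_(q, r)) :
  `|A *m B| <= q%:R * (`|A| * `|B|).
Proof.
apply: mxnorm_le => [|i j]; first by rewrite !mulr_ge0.
rewrite mxE (le_trans (ler_norm_sum _ _ _)) //.
apply: le_trans (_ : _ <= \sum_(k < q) `|A| * `|B|) _.
  by apply: ler_sum => k _; rewrite normrM ler_pM ?normr_ge0 ?mxnorm_coord_le.
by rewrite sumr_const card_ord mulr_natl.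
Qed.

Lemma mulmx_delta p q (X : 'M[R]_(p, q)) i j :
  (X *m (delta_mx j 0 : 'cV[R]_q)) i 0 = X i j.
Proof.
rewrite mxE (bigD1 j) //= !mxE !eqxx mulr1 big1 ?addr0 // => k /negbTE kj.
by rewrite mxE kj mulr0.
Qed.

Lemma mulmx_colP p q (A B : 'M[R]_(p, q)) :
  (forall z : 'cV[R]_q, A *m z = B *m z) -> A = B.
Proof.
move=> AB; apply/matrixP => i j.
by rewrite -[A i j]mulmx_delta -[B i j]mulmx_delta AB.
Qed.

End Euclid.

Section MatrixConvergence.
Variable R : realType.
Context {T : Type} {F : set_system T} {FF : Filter F}.

Lemma cvg_mxP p q (u : T -> 'M[R]_(p, q)) (M : 'M[R]_(p, q)) :
  u @ F --> M <-> forall i j, (fun t => u t i j) @ F --> M i j.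
Proof.
split=> [uM i j|uM]; first exact: (cvg_comp _ _ uM (@coord_continuous R p q i j M)).
apply/cvgrPdist_le => e e0.
have : \forall t \near F, forall ij : 'I_p * 'I_q, `|M ij.1 ij.2 - u t ij.1 ij.2| <= e.
  by apply: filter_forall => -[i j]; move/cvgrPdist_le: (uM i j) => /(_ e e0).
apply: filterS => t ut; apply: mxnorm_le => [|i j]; first exact: ltW.
by rewrite !mxE; exact: (ut (i, j)).
Qed.

Lemma cvg_sum_fin (I : finType) (f : I -> T -> R) (a : I -> R) :
  (forall i, f i @ F --> a i) -> (fun t => \sum_i f i t) @ F --> \sum_i a i.
Proof. by move=> fa; apply: cvg_big => //; exact: add_continuous. Qed.

Lemma cvg_prod_fin (I : finType) (f : I -> T -> R) (a : I -> R) :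
  (forall i, f i @ F --> a i) -> (fun t => \prod_i f i t) @ F --> \prod_i a i.
Proof. by move=> fa; apply: cvg_big => //; exact: mul_continuous. Qed.

Lemma cvg_mulmx p q r (A : T -> 'M[R]_(p, q)) (B : T -> 'M[R]_(q, r))
  (A0 : 'M[R]_(p, q)) (B0 : 'M[R]_(q, r)) :
  A @ F --> A0 -> B @ F --> B0 -> (fun t => A t *m B t) @ F --> A0 *m B0.
Proof.
move=> /cvg_mxP AA0 /cvg_mxP BB0; apply/cvg_mxP => i j; rewrite mxE.
under eq_cvg do rewrite mxE.
by apply: cvg_sum_fin => k; apply: cvgM; [exact: AA0 | exact: BB0].
Qed.

Lemma cvg_trmx p q (A : T -> 'M[R]_(p, q)) (A0 : 'M[R]_(p, q)) :
  A @ F --> A0 -> (fun t => (A t)^T) @ F --> A0^T.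
Proof.
move=> /cvg_mxP AA0; apply/cvg_mxP => i j; rewrite mxE.
by under eq_cvg do rewrite mxE; exact: AA0.
Qed.

Lemma cvg_col_mx p1 p2 q (A : T -> 'M[R]_(p1, q)) (B : T -> 'M[R]_(p2, q))
  (A0 : 'M[R]_(p1, q)) (B0 : 'M[R]_(p2, q)) :
  A @ F --> A0 -> B @ F --> B0 -> (fun t => col_mx (A t) (B t)) @ F --> col_mx A0 B0.
Proof.
move=> /cvg_mxP AA0 /cvg_mxP BB0; apply/cvg_mxP => i j; rewrite -(splitK i).
case: (fintype.split i) => k /=.
  by rewrite col_mxEu; under eq_cvg do rewrite col_mxEu; exact: AA0.
by rewrite col_mxEd; under eq_cvg do rewrite col_mxEd; exact: BB0.
Qed.

Lemma cvg_row_mx p q1 q2 (A : T -> 'M[R]_(p, q1)) (B : T -> 'M[R]_(p, q2))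
  (A0 : 'M[R]_(p, q1)) (B0 : 'M[R]_(p, q2)) :
  A @ F --> A0 -> B @ F --> B0 -> (fun t => row_mx (A t) (B t)) @ F --> row_mx A0 B0.
Proof.
move=> /cvg_trmx AA0 /cvg_trmx BB0; rewrite -[row_mx A0 B0]trmxK tr_row_mx.
under eq_cvg do rewrite -[row_mx _ _]trmxK tr_row_mx.
exact/cvg_trmx/cvg_col_mx.
Qed.

Lemma cvg_usubmx p1 p2 q (A : T -> 'M[R]_(p1 + p2, q))
  (A0 : 'M[R]_(p1 + p2, q)) :
  A @ F --> A0 -> (fun t => usubmx (A t)) @ F --> usubmx A0.
Proof.
move=> /cvg_mxP AA0; apply/cvg_mxP => i j; rewrite mxE.
by under eq_cvg do rewrite mxE; exact: AA0.
Qed.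

Lemma cvg_dsubmx p1 p2 q (A : T -> 'M[R]_(p1 + p2, q))
  (A0 : 'M[R]_(p1 + p2, q)) :
  A @ F --> A0 -> (fun t => dsubmx (A t)) @ F --> dsubmx A0.
Proof.
move=> /cvg_mxP AA0; apply/cvg_mxP => i j; rewrite mxE.
by under eq_cvg do rewrite mxE; exact: AA0.
Qed.

Lemma cvg_det m (A : T -> 'M[R]_m) (A0 : 'M[R]_m) :
  A @ F --> A0 -> (fun t => \det (A t)) @ F --> \det A0.
Proof.
move=> /cvg_mxP AA0; apply: cvg_sum_fin => s; apply: cvgM; first exact: cvg_cst.
by apply: cvg_prod_fin => i; exact: AA0.
Qed.

Lemma cvg_adj m (A : T -> 'M[R]_m) (A0 : 'M[R]_m) :
  A @ F --> A0 -> (fun t => \adj (A t)) @ F --> \adj A0.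
Proof.
move=> /cvg_mxP AA0; apply/cvg_mxP => i j; rewrite mxE /cofactor.
under eq_cvg do rewrite mxE /cofactor.
apply: cvgM; first exact: cvg_cst.
apply/cvg_det/cvg_mxP => k l; rewrite !mxE.
by under eq_cvg do rewrite !mxE; exact: AA0.
Qed.

Lemma cvg_invmx m (A : T -> 'M[R]_m) (A0 : 'M[R]_m) :
  A0 \in unitmx -> A @ F --> A0 -> (fun t => invmx (A t)) @ F --> invmx A0.
Proof.
move=> uA0 AA0; have detA := cvg_det AA0.
have detA0 : \det A0 != 0 by rewrite -unitfE -unitmxE.
have invmxE : \forall t \near F, (\det (A t))^-1 *: \adj (A t) = invmx (A t).
  by apply: filterS (cvgr_neq0 _ detA detA0) => t dt; rewrite /invmx unitmxE unitfE dt.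
apply: cvg_trans (near_eq_cvg invmxE) _; rewrite /invmx uA0.
by apply: cvgZ; [apply: cvgV | exact: cvg_adj].
Qed.

End MatrixConvergence.

Section Projections.
Variable R : realType.
Implicit Types m : nat.

Definition is_orthoproj m (P : 'M[R]_m) (L : set 'cV[R]_m) : Prop :=
  [/\ P^T = P, P *m P = P & [set P *m z | z in [set: 'cV[R]_m]] = L].

Lemma ker0_unitmx m (M : 'M[R]_m) :
  (forall z : 'cV[R]_m, M *m z = 0 -> z = 0) -> M \in unitmx.
Proof.
move=> Minj; rewrite -unitmx_tr -row_free_unit -kermx_eq0.
apply/eqP/row_matrixP => i; rewrite row0.
have /sub_kermxP kerM : (row i (kermx M^T) <= kermx M^T)%MS by exact: row_sub.
apply: trmx_inj; rewrite trmx0; apply: Minj.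
by rewrite -[M in M *m _]trmxK -trmx_mul kerM trmx0.
Qed.

Lemma mxrank_full_mulmx_eq0 m k (B : 'M[R]_(m, k)) :
  \rank B = k -> forall z : 'cV[R]_k, B *m z = 0 -> z = 0.
Proof.
move=> rB z Bz; have rfBt : row_free B^T by rewrite /row_free mxrank_tr rB.
apply: trmx_inj; rewrite trmx0; apply: (row_free_inj rfBt).
by rewrite /= -trmx_mul Bz !trmx0 mul0mx.
Qed.

Lemma orthoproj_unique m (P Q : 'M[R]_m) (L : set 'cV[R]_m) :
  is_orthoproj P L -> is_orthoproj Q L -> P = Q.
Proof.
move=> [sP iP rP] [sQ iQ rQ].
have fix_range (X Y : 'M[R]_m) : X *m X = X ->
    [set X *m z | z in [set: 'cV[R]_m]] = [set Y *m z | z in [set: 'cV[R]_m]] ->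
    X *m Y = Y.
  move=> iX rXY; apply: mulmx_colP => z; rewrite -mulmxA.
  have : [set Y *m z | z in [set: 'cV[R]_m]] (Y *m z) by exists z.
  by rewrite -rXY => -[y _ <-]; rewrite mulmxA iX.
have PQ := fix_range P Q iP (etrans rP (esym rQ)).
have QP := fix_range Q P iQ (etrans rQ (esym rP)).
by rewrite -sP -QP trmx_mul sP sQ PQ.
Qed.

Lemma proj_mxE m (P : 'M[R]_m) (L : set 'cV[R]_m) :
  is_orthoproj P L -> Defs.proj_mx L = P.
Proof.
move=> PL; have ex_proj : exists P', is_orthoproj P' L by exists P.
exact: orthoproj_unique (xgetPex 0 ex_proj) PL.
Qed.

Lemma Znn_proj_mx n (L : set 'cV[R]_(n + n)) :
  is_Znn L -> is_orthoproj (Defs.proj_mx L) L.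
Proof.
move=> [B [rB ->]]; set X := invmx (B^T *m B).
have uBtB : B^T *m B \in unitmx.
  apply: ker0_unitmx => z BtBz; apply: (mxrank_full_mulmx_eq0 rB); apply: dotvv_eq0.
  by rewrite dotv_mulmx mulmxA BtBz dotv0r.
have XBtB : X *m (B^T *m B) = 1%:M by rewrite mulVmx.
suff PL : is_orthoproj (B *m X *m B^T) [set B *m c | c in [set: 'cV[R]_n]].
  by rewrite (proj_mxE PL).
split.
- by rewrite !trmx_mul trmxK /X trmx_inv trmx_mul trmxK mulmxA.
- by rewrite -!mulmxA [B^T *m (B *m _)]mulmxA [X *m (_ *m _)]mulmxA XBtB mul1mx.
- apply/seteqP; split => _ [z _ <-].
    by exists (X *m B^T *m z) => //; rewrite !mulmxA.
  exists (B *m z) => //.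
  by rewrite -!mulmxA [B^T *m (B *m z)]mulmxA [X *m (_ *m z)]mulmxA XBtB mul1mx.
Qed.

Lemma Znn_mulmx n (M : 'M[R]_(n + n)) (L : set 'cV[R]_(n + n)) :
  M \in unitmx -> is_Znn L -> is_Znn (mulmx M @` L).
Proof.
move=> uM [B [rB ->]]; exists (M *m B); split.
  rewrite -mxrank_tr trmx_mul mxrankMfree ?mxrank_tr //.
  by rewrite row_free_unit unitmx_tr.
rewrite image_comp; apply: eq_imagel => c _ /=; exact: mulmxA.
Qed.

End Projections.

Section ImageProjection.
Variable R : realType.
Implicit Types m : nat.

(* With C := M P, whose range is M L, the matrix C^T C + (1 - P) acts as the
   Gram matrix of C on L and as the identity on the orthogonal complement of L;
   hence it is invertible and C (C^T C + 1 - P)^-1 C^T projects onto M L. *)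
Definition image_gram m (M P : 'M[R]_m) : 'M[R]_m :=
  (M *m P)^T *m (M *m P) + (1%:M - P).

Definition image_proj m (M P : 'M[R]_m) : 'M[R]_m :=
  M *m P *m invmx (image_gram M P) *m (M *m P)^T.

Lemma image_gram_unit m (M P : 'M[R]_m) :
  P^T = P -> P *m P = P -> M \in unitmx -> image_gram M P \in unitmx.
Proof.
move=> sP iP uM; apply: ker0_unitmx => z Dz.
set C := M *m P; set Q := 1%:M - P.
have sQ : Q^T = Q by rewrite linearB /= trmx1 sP.
have iQ : Q *m Q = Q by rewrite mulmxBl mul1mx mulmxBr mulmx1 iP subrr subr0.
have : dotv (C *m z) (C *m z) + dotv (Q *m z) (Q *m z) = 0.
  rewrite dotv_mulmx [X in _ + X]dotv_mulmx sQ [Q *m (_ *m z)]mulmxA iQ.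
  by rewrite -dotvDr mulmxA -mulmxDl Dz dotv0r.
move/eqP; rewrite paddr_eq0 ?dotvv_ge0 // => /andP[/eqP/dotvv_eq0 Cz /eqP/dotvv_eq0 Qz].
have Pz : P *m z = 0.
  by rewrite -[P *m z]mul1mx -(mulVmx uM) -mulmxA [M *m _]mulmxA -/C Cz mulmx0.
by move: Qz; rewrite mulmxBl mul1mx Pz subr0.
Qed.

Lemma image_proj_orthoproj m (M P : 'M[R]_m) (L : set 'cV[R]_m) :
  is_orthoproj P L -> M \in unitmx -> is_orthoproj (image_proj M P) (mulmx M @` L).
Proof.
move=> [sP iP rP] uM; rewrite /image_proj.
set C := M *m P; set D := image_gram M P; set X := invmx D.
have XD : X *m D = 1%:M by rewrite mulVmx // image_gram_unit.
have CP : C *m P = C by rewrite /C -mulmxA iP.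
have sD : D^T = D by rewrite /D /image_gram linearD /= trmx_mul trmxK linearB /= trmx1 sP.
have DP : D *m P = C^T *m C.
  by rewrite /D /image_gram mulmxDl mulmxBl mul1mx iP subrr addr0 -mulmxA CP.
have CXC : C *m X *m (C^T *m C) = C.
  by rewrite -DP mulmxA -[C *m X *m D]mulmxA XD mulmx1 CP.
split.
- by rewrite trmx_mul [(C *m X)^T]trmx_mul trmxK /X trmx_inv sD mulmxA.
- by rewrite mulmxA [_ *m (C *m X)]mulmxA -[C *m X *m C^T *m C]mulmxA CXC.
- apply/seteqP; split.
    move=> _ [z _ <-]; exists (P *m (X *m C^T *m z)); last by rewrite !mulmxA.
    by rewrite -rP; exists (X *m C^T *m z).
  move=> _ [t Lt <-]; move: Lt; rewrite -rP => -[y _ <-]; exists (C *m y) => //.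
  by rewrite mulmxA -[C *m X *m C^T *m C]mulmxA CXC mulmxA.
Qed.

Lemma cvg_image_proj m (Ms Ps : nat -> 'M[R]_m) (M P : 'M[R]_m) :
  image_gram M P \in unitmx -> Ms @ \oo --> M -> Ps @ \oo --> P ->
  (fun k => image_proj (Ms k) (Ps k)) @ \oo --> image_proj M P.
Proof.
move=> uD MsM PsP.
have CsC : (fun k => Ms k *m Ps k) @ \oo --> M *m P by exact: cvg_mulmx.
have CtCs : (fun k => (Ms k *m Ps k)^T *m (Ms k *m Ps k)) @ \oo --> (M *m P)^T *m (M *m P).
  by apply: cvg_mulmx => //; exact: cvg_trmx.
have Qs : (fun k => 1%:M - Ps k) @ \oo --> (1%:M - P : 'M[R]_m).
  by apply: cvgB => //; exact: cvg_cst.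
apply: cvg_mulmx; last exact: cvg_trmx.
by apply: cvg_mulmx => //; apply: cvg_invmx => //; exact: cvgD CtCs Qs.
Qed.

End ImageProjection.

Section OperatorNorm.
Variables (R : realType) (m : nat).
Implicit Types X : 'M[R]_m.

Lemma enorm_mulmx_le X (z : 'cV[R]_m) :
  enorm z <= 1 -> enorm (X *m z) <= m%:R * (m%:R * `|X|).
Proof.
move=> z1; rewrite (le_trans (enorm_le_mxnorm _)) // ler_wpM2l //.
rewrite (le_trans (mxnorm_mulmx_le _ _)) // ler_wpM2l // ler_piMr //.
exact: le_trans (mxnorm_le_enorm _) z1.
Qed.

Lemma opnorm_le_mxnorm X : opnorm X <= m%:R * (m%:R * `|X|).
Proof.
apply: ge_sup; first by exists (enorm (X *m 0)), 0; rewrite //= enorm0.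
by move=> _ [z z1 <-]; exact: enorm_mulmx_le.
Qed.

Lemma enorm_mulmx_le_opnorm X (z : 'cV[R]_m) :
  enorm z <= 1 -> enorm (X *m z) <= opnorm X.
Proof.
move=> z1; apply: ub_le_sup; last by exists z.
by exists (m%:R * (m%:R * `|X|)) => _ [y y1 <-]; exact: enorm_mulmx_le.
Qed.

Lemma mxnorm_le_opnorm X : `|X| <= opnorm X.
Proof.
have opX_ge0 : 0 <= opnorm X.
  by rewrite -(enorm0 R m) -(mulmx0 _ X) enorm_mulmx_le_opnorm // enorm0.
apply: mxnorm_le => // i j; rewrite -mulmx_delta.
by rewrite (le_trans (coord_le_enorm _ _)) // enorm_mulmx_le_opnorm // enorm_delta.
Qed.

Lemma opnorm_cvg0P {T : Type} {F : set_system T} {FF : Filter F}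
    (X : T -> 'M[R]_m) X0 :
  (fun t => opnorm (X0 - X t)) @ F --> 0 <-> X @ F --> X0.
Proof.
have opX_ge0 Y : 0 <= opnorm Y := le_trans (normr_ge0 _) (mxnorm_le_opnorm Y).
split=> /cvgrPdist_le XX0; apply/cvgrPdist_le => e e0.
  apply: filterS (XX0 e e0) => t; rewrite sub0r normrN ger0_norm //.
  exact: le_trans (mxnorm_le_opnorm _).
have K1_gt0 : 0 < m%:R * m%:R + 1 :> R by rewrite ltr_wpDl ?mulr_ge0.
apply: filterS (XX0 _ (divr_gt0 e0 K1_gt0)) => t Xt.
rewrite sub0r normrN ger0_norm //; apply: le_trans (opnorm_le_mxnorm _) _.
rewrite mulrA (le_trans (_ : _ <= (m%:R * m%:R + 1) * `|X0 - X t|)) //.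
  by rewrite ler_wpM2r // lerDl.
by rewrite mulrC -ler_pdivlMr.
Qed.

End OperatorNorm.

Lemma dZ_mulmx_cvg0 (R : realType) (n : nat) (L : set 'cV[R]_(n + n))
    (Ls : nat -> set 'cV[R]_(n + n)) (Ms : nat -> 'M[R]_(n + n)) (M : 'M[R]_(n + n)) :
  is_Znn L -> (forall k, is_Znn (Ls k)) -> (forall k, Ms k \in unitmx) ->
  M \in unitmx -> Ms @ \oo --> M ->
  (fun k => dZ L (Ls k)) @ \oo --> 0 ->
  (fun k => dZ (mulmx M @` L) (mulmx (Ms k) @` Ls k)) @ \oo --> 0.
Proof.
move=> ZL ZLs uMs uM MsM /opnorm_cvg0P PsP; apply/opnorm_cvg0P.
have [sP iP _] := Znn_proj_mx ZL.
rewrite (proj_mxE (image_proj_orthoproj (Znn_proj_mx ZL) uM)).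
under eq_cvg do rewrite (proj_mxE (image_proj_orthoproj (Znn_proj_mx (ZLs _)) (uMs _))).
exact: cvg_image_proj (image_gram_unit sP iP uM) MsM PsP.
Qed.

Lemma diff_approx (R : realType) (V W : normedModType R) (f : V -> W) (x : V) :
  differentiable f x -> forall e : R, 0 < e -> exists2 d : R, 0 < d &
    forall y, `|y - x| < d -> `|f y - f x - 'd f x (y - x)| <= e * `|y - x|.
Proof.
move=> df e e0; have /eqaddoP/(_ e e0)/nbhs_ballP[d d0 fd] := diff_locally df.
exists d => // y yx; have /fd : ball (0 : V) d (y - x).
  by rewrite -ball_normE /ball_ /= sub0r normrN.
by rewrite /= !fctE /= subrK opprD addrA.
Qed.

Lemma cvg_diff_quotient (R : realType) (V W : normedModType R) (f : V -> W)
    (x v : V) (t : nat -> R) (xk : nat -> V) :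
  differentiable f x -> (forall k, 0 < t k) -> xk @ \oo --> x ->
  (fun k => (t k)^-1 *: (xk k - x)) @ \oo --> v ->
  (fun k => (t k)^-1 *: (f (xk k) - f x)) @ \oo --> 'd f x v.
Proof.
move=> df t_gt0 xkx qv; set q := fun k => (t k)^-1 *: (xk k - x).
have -> : (fun k => (t k)^-1 *: (f (xk k) - f x)) =
    (fun k => (t k)^-1 *: (f (xk k) - f x - 'd f x (xk k - x)) + 'd f x (q k)).
  by apply/funext => k; rewrite /q linearZ -scalerDr subrK.
rewrite -[X in _ --> X]add0r; apply: cvgD; last first.
  by apply: continuous_cvg => //; exact: diff_continuous.
(* The remainder of the first-order expansion is o(|xk k - x|), and
   |xk k - x| / t k stays bounded since the quotients q k converge. *)
apply/cvgrPdist_le => e e0; set B := `|v| + 1.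
have B_gt0 : 0 < B by rewrite ltr_wpDl.
have [d d0 fd] := diff_approx df (divr_gt0 e0 B_gt0).
have qB : \forall k \near \oo, `|q k| <= B.
  move/cvgrPdist_le/(_ 1 ltr01) : qv; apply: filterS => k vq.
  by rewrite -[q k](subrKC v) (le_trans (ler_normD _ _)) // lerD2l distrC.
have xd : \forall k \near \oo, `|xk k - x| < d.
  by move/cvgrPdist_lt/(_ d d0) : xkx; apply: filterS => k; rewrite distrC.
near=> k; have tk_ge0 : 0 <= (t k)^-1 by rewrite invr_ge0 ltW.
have xkd : `|xk k - x| < d by near: k.
rewrite sub0r normrN normrZ ger0_norm //.
apply: le_trans (ler_wpM2l tk_ge0 (fd _ xkd)) _.
rewrite mulrCA -(ger0_norm tk_ge0) -normrZ -/(q k).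
have qkB : `|q k| <= B by near: k.
by rewrite -[leRHS](divfK (lt0r_neq0 B_gt0)) ler_wpM2l // ltW // divr_gt0.
Unshelve. all: by end_near.
Qed.

Section HessianSymmetry.
Variables (R : realType) (n : nat).
Variables (g : 'cV[R]_n -> R) (G : 'cV[R]_n -> 'cV[R]_n) (H : 'cV[R]_n -> 'M[R]_n).
Hypothesis gC2 : C2_with g G H.
Implicit Types (x u v : 'cV[R]_n) (t : R).

Lemma is_derive_line x u t :
  is_derive t 1 (fun r : R => g (x + r *: u)) (dotv (G (x + t *: u)) u).
Proof.
set y := x + t *: u; have [/(_ y)[dgy dgyE] _ _] := gC2.
have quotE : (fun h : R => h^-1 *: ((fun r => g (x + r *: u)) (h *: 1 + t) - g y)) =
             (fun h : R => h^-1 *: (g (h *: u + y) - g y)).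
  by apply/funext => h; rewrite /y -[h%:A]/(h * 1) mulr1 scalerDl addrCA addrC.
apply: DeriveDef; first by rewrite /derivable quotE; exact: diff_derivable.
by rewrite /derive quotE -/(derive g y u) (deriveE _ dgy) dgyE.
Qed.

Definition second_diff x u v t :=
  g (x + t *: u + t *: v) - g (x + t *: u) - g (x + t *: v) + g x.

Lemma second_diffC x u v t : second_diff x u v t = second_diff x v u t.
Proof. by rewrite /second_diff [x + t *: v + _]addrAC; ring. Qed.

Lemma second_diff_mvt x u v t : 0 < t -> exists2 s, 0 <= s <= t &
  second_diff x u v t = t * dotv (G (x + t *: v + s *: u) - G (x + s *: u)) u.
Proof.
move=> t_gt0; pose psi r := g (x + t *: v + r *: u) - g (x + r *: u).
have psi_der (r : R) : is_derive r (1 : R) psi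
    (dotv (G (x + t *: v + r *: u)) u - dotv (G (x + r *: u)) u).
  exact: is_deriveB (is_derive_line _ _ _) (is_derive_line _ _ _).
have psi_cont : {within `[0, t], continuous psi}.
  apply: continuous_subspaceT => r; apply: differentiable_continuous.
  by apply/derivable1_diffP; have [] := psi_der r.
have [s] := MVT_segment (ltW t_gt0) (fun r _ => psi_der r) psi_cont.
rewrite in_itv /= => st psiE; exists s => //.
rewrite subr0 in psiE; rewrite dotvBl mulrC -psiE /psi /second_diff !scale0r !addr0.
by rewrite [x + t *: u + _]addrAC; ring.
Qed.

Lemma grad_increment_approx x eps : 0 < eps -> exists2 d, 0 < d &
  forall w1 w2, `|w1| < d -> `|w2| < d ->
  `|G (x + w1) - G (x + w2) - H x *m (w1 - w2)| <= eps * (`|w1| + `|w2|).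
Proof.
move=> eps_gt0; have [_ /(_ x)[dGx dGxE] _] := gC2.
have [d d_gt0 Gd] := diff_approx dGx eps_gt0.
exists d => // w1 w2 w1d w2d.
have Gw (w : 'cV[R]_n) : `|w| < d -> `|G (x + w) - G x - H x *m w| <= eps * `|w|.
  by move=> wd; have := Gd (x + w); rewrite addrC addKr dGxE; apply.
have -> : G (x + w1) - G (x + w2) - H x *m (w1 - w2) =
    (G (x + w1) - G x - H x *m w1) - (G (x + w2) - G x - H x *m w2).
  by rewrite mulmxBr; apply/matrixP => i j; rewrite !mxE; ring.
by rewrite mulrDr (le_trans (ler_normB _ _)) // lerD // Gw.
Qed.

Lemma second_diff_approx x u v e : 0 < e -> exists2 d, 0 < d &
  forall t, 0 < t < d ->
  `|second_diff x u v t - t ^+ 2 * dotv u (H x *m v)| <= t ^+ 2 * e.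
Proof.
move=> e_gt0; set U := `|u| + `|v|; set K := 2 * n%:R * U ^+ 2.
have U_ge0 : 0 <= U by rewrite addr_ge0.
have K1_gt0 : 0 < K + 1 by rewrite ltr_wpDl // !mulr_ge0 // sqr_ge0.
have [d d_gt0 Gd] := grad_increment_approx x (divr_gt0 e_gt0 K1_gt0).
exists (d / (U + 1)); first by rewrite divr_gt0 // ltr_wpDl.
move=> t /andP[t_gt0 td]; have t_ge0 := ltW t_gt0.
have [s /andP[s_ge0 st] ->] := second_diff_mvt x u v t_gt0.
have tU_d : t * U < d.
  rewrite (le_lt_trans (_ : _ <= t * (U + 1))) ?ler_wpM2l ?lerDl //.
  by rewrite -ltr_pdivlMr // ltr_wpDl.
have w1_le : `|t *: v + s *: u| <= t * U.
  rewrite (le_trans (ler_normD _ _)) // !normrZ !ger0_norm //.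
  by rewrite mulrDr addrC lerD2r ler_wpM2r.
have w2_le : `|s *: u| <= t * U.
  by rewrite normrZ ger0_norm // (le_trans (ler_wpM2r _ st)) // ler_wpM2l ?lerDl.
have := Gd _ _ (le_lt_trans w1_le tU_d) (le_lt_trans w2_le tU_d).
rewrite addrA addrK -scalemxAr; set r := _ - t *: _ => r_le.
have -> : G (x + t *: v + s *: u) - G (x + s *: u) = t *: (H x *m v) + r by rewrite subrKC.
rewrite dotvDl dotvZl [dotv (H x *m v) u]dotvC.
have -> : t * (t * dotv u (H x *m v) + dotv r u) - t ^+ 2 * dotv u (H x *m v) =
  t * dotv r u by ring.
rewrite normrM ger0_norm // (le_trans (ler_wpM2l t_ge0 (dotv_le _ _))) //.
set eps := e / (K + 1) in r_le *.
have eps_ge0 : 0 <= eps by rewrite divr_ge0 ?ltW.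
have r_le2 : `|r| <= eps * (2 * (t * U)).
  by rewrite (le_trans r_le) // ler_wpM2l // mulr_natl mulr2n lerD.
apply: le_trans (_ : _ <= t * (n%:R * (eps * (2 * (t * U)) * U))) _.
  by rewrite ler_wpM2l // ler_wpM2l // ler_pM // ?normr_ge0 // lerDl.
have -> : t * (n%:R * (eps * (2 * (t * U)) * U)) = t ^+ 2 * (K * eps) by rewrite /K; ring.
by rewrite ler_wpM2l ?sqr_ge0 // /eps mulrA ler_pdivrMr // mulrC ler_wpM2l ?lerDl // ltW.
Qed.

Lemma dotv_hessianC x u v : dotv u (H x *m v) = dotv v (H x *m u).
Proof.
set a := dotv u _; set b := dotv v _.
apply/eqP; rewrite -subr_eq0 -normr_le0; apply/ler_addgt0Pr => e e_gt0.
have e2_gt0 : 0 < e / 2 by rewrite divr_gt0.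
have [d1 d1_gt0 D1] := second_diff_approx x u v e2_gt0.
have [d2 d2_gt0 D2] := second_diff_approx x v u e2_gt0.
have d_gt0 : 0 < Num.min d1 d2 by rewrite lt_min d1_gt0 d2_gt0.
set t := Num.min d1 d2 / 2; have t_gt0 : 0 < t by rewrite divr_gt0.
have : t < Num.min d1 d2 by rewrite ltr_pdivrMr // ltr_pMr // ltr1n.
rewrite lt_min => /andP[td1 td2].
have := D1 t; rewrite t_gt0 td1 => /(_ isT) D1t.
have := D2 t; rewrite t_gt0 td2 -second_diffC => /(_ isT) D2t.
have : `|t ^+ 2 * (a - b)| <= t ^+ 2 * (e / 2) + t ^+ 2 * (e / 2).
  have -> : t ^+ 2 * (a - b) =
    (second_diff x u v t - t ^+ 2 * b) - (second_diff x u v t - t ^+ 2 * a) by ring.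
  by rewrite (le_trans (ler_normB _ _)) // lerD.
by rewrite -mulrDr -splitr normrM ger0_norm ?sqr_ge0 // ler_pM2l ?exprn_gt0 // add0r.
Qed.

Lemma hessian_sym x : (H x)^T = H x.
Proof.
apply/matrixP => i j; have := dotv_hessianC x (delta_mx i 0) (delta_mx j 0).
by rewrite !dotv_delta !mulmx_delta mxE.
Qed.

End HessianSymmetry.

Section Perturbation.
Variables (R : realType) (n : nat).
Implicit Types (phi : 'cV[R]_n -> \bar R) (c : 'cV[R]_n -> R)
  (G : 'cV[R]_n -> 'cV[R]_n) (H : 'cV[R]_n -> 'M[R]_n) (K : 'M[R]_n)
  (x : 'cV[R]_n) (z w : 'cV[R]_(n + n)).

Definition perturb phi c : 'cV[R]_n -> \bar R := fun y => (phi y + (c y)%:E)%E.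

Definition gph_shift G z : 'cV[R]_(n + n) :=
  col_mx (usubmx z) (dsubmx z + G (usubmx z)).

Definition shear K : 'M[R]_(n + n) := block_mx 1%:M 0 K 1%:M.

Lemma perturbK phi c : perturb (perturb phi c) (fun x => - c x) = phi.
Proof.
by apply/funext => y; rewrite /perturb; case: (phi y) => //= r; rewrite -!EFinD addrK.
Qed.

Lemma usubmx_gph_shift G z : usubmx (gph_shift G z) = usubmx z.
Proof. exact: col_mxKu. Qed.

Lemma gph_shiftK G z : gph_shift (fun x => - G x) (gph_shift G z) = z.
Proof. by rewrite /gph_shift col_mxKu col_mxKd addrK vsubmxK. Qed.

Lemma shear_mulmx K w : shear K *m w = col_mx (usubmx w) (dsubmx w + K *m usubmx w).
Proof. by rewrite -[w in LHS]vsubmxK mul_block_col !mul1mx mul0mx addr0 addrC. Qed.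

Lemma shearNK K : shear (- K) *m shear K = 1%:M.
Proof.
rewrite mulmx_block !mul1mx !mulmx1 !mul0mx !mulmx0 !addr0 add0r addNr.
by rewrite -scalar_mx_block.
Qed.

Lemma shearKN K : shear K *m shear (- K) = 1%:M.
Proof. exact/mulmx1C/shearNK. Qed.

Lemma shear_unit K : shear K \in unitmx.
Proof. by case/mulmx1_unit: (shearKN K). Qed.

Lemma cvg_shear H (xk : nat -> 'cV[R]_n) x : continuous H -> xk @ \oo --> x ->
  (fun k => shear (H (xk k))) @ \oo --> shear (H x).
Proof.
move=> cH xkx; apply: cvg_col_mx; apply: cvg_row_mx; try exact: cvg_cst.
exact: (continuous_cvg _ (cH x) xkx).
Qed.

Lemma C2_continuous c G H : C2_with c G H -> continuous c.
Proof. by case=> dc _ _ x; apply: differentiable_continuous; case: (dc x). Qed.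

Lemma C2_grad_continuous c G H : C2_with c G H -> continuous G.
Proof. by case=> _ dG _ x; apply: differentiable_continuous; case: (dG x). Qed.

Lemma C2N c G H : C2_with c G H ->
  C2_with (fun x => - c x) (fun x => - G x) (fun x => - H x).
Proof.
case=> dc dG cH; split => [x | x | x].
- have [dcx dcxE] := dc x; split; first exact: differentiableN.
  by move=> v; rewrite diffN // fctE dcxE dotvNl.
- have [dGx dGxE] := dG x; split; first exact: differentiableN.
  by move=> v; rewrite diffN // fctE dGxE mulNmx.
- by apply: continuousN; exact: cH.
Qed.

Section SumRule.
Variables (c : 'cV[R]_n -> R) (G : 'cV[R]_n -> 'cV[R]_n) (H : 'cV[R]_n -> 'M[R]_n).
Hypothesis cC2 : C2_with c G H.
Variable phi : 'cV[R]_n -> \bar R.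

Lemma reg_subdiff_perturb x xs :
  reg_subdiff phi x xs -> reg_subdiff (perturb phi c) x (xs + G x).
Proof.
move=> [phix_fin phix]; split; first by rewrite fin_numD phix_fin.
move=> e e0; have e2 : 0 < e / 2 by rewrite divr_gt0.
have [d1 d1_gt0 phid1] := phix _ e2.
have [/(_ x)[dcx dcxE] _ _] := cC2.
have [d2 d2_gt0 cd2] := diff_approx dcx e2.
exists (Num.min d1 d2); first by rewrite lt_min d1_gt0 d2_gt0.
move=> y /andP[yx0]; rewrite lt_min => /andP[yxd1 yxd2].
have {phid1}/= := phid1 y; rewrite yx0 yxd1 => /(_ isT).
have := cd2 y (le_lt_trans (mxnorm_le_enorm _) yxd2); rewrite dcxE ler_norml.
have := ler_wpM2l (ltW e2) (mxnorm_le_enorm (y - x)).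
rewrite /perturb; move: phix_fin; case: (phi x) => [r| |] //= _.
case: (phi y) => [s| |] //=; last by rewrite addye ?leey.
rewrite -!EFinD !lee_fin dotvDl => ? /andP[? _] ?.
have -> : e = e / 2 + e / 2 by rewrite -splitr.
lra.
Qed.

Lemma cvg_perturb (xk : nat -> 'cV[R]_n) x : xk @ \oo --> x ->
  (fun k => phi (xk k)) @ \oo --> phi x ->
  (fun k => perturb phi c (xk k)) @ \oo --> perturb phi c x.
Proof.
move=> xkx phixk; apply: cvgeD => //; first exact: fin_num_adde_defl.
apply: cvg_EFin; first exact: nearW.
by apply: cvg_comp xkx _; exact: (C2_continuous cC2).
Qed.

Lemma lim_subdiff_perturb x xs :
  lim_subdiff phi x xs -> lim_subdiff (perturb phi c) x (xs + G x).
Proof.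
move=> [phix_fin [xk [xsk [xkx phixk xskxs xk_reg]]]].
split; first by rewrite fin_numD phix_fin.
exists xk, (fun k => xsk k + G (xk k)); split.
- exact: xkx.
- exact: cvg_perturb.
- apply: cvgD xskxs _; apply: cvg_comp xkx _; exact: (C2_grad_continuous cC2).
- by move=> k; exact: reg_subdiff_perturb.
Qed.

Lemma gph_sd_perturb z : gph_sd phi z -> gph_sd (perturb phi c) (gph_shift G z).
Proof. by rewrite /gph_sd /= usubmx_gph_shift col_mxKd; exact: lim_subdiff_perturb. Qed.

Lemma cvg_gph_shift (zk : nat -> 'cV[R]_(n + n)) z : zk @ \oo --> z ->
  (fun k => gph_shift G (zk k)) @ \oo --> gph_shift G z.
Proof.
move=> zkz; apply: cvg_col_mx; first exact: cvg_usubmx.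
apply: cvgD; first exact: cvg_dsubmx.
by apply: cvg_comp (cvg_usubmx zkz) _; exact: (C2_grad_continuous cC2).
Qed.

Lemma att_conv_perturb zk z :
  att_conv phi zk z -> att_conv (perturb phi c) (fun k => gph_shift G (zk k)) (gph_shift G z).
Proof.
move=> [zk_gph zkz phizk]; split.
- by move=> k; exact: gph_sd_perturb.
- exact: cvg_gph_shift.
- rewrite usubmx_gph_shift; under eq_cvg do rewrite usubmx_gph_shift.
  by apply: cvg_perturb => //; exact: cvg_usubmx.
Qed.

Lemma att_tangent_perturb z w : att_tangent phi z w ->
  att_tangent (perturb phi c) (gph_shift G z) (shear (H (usubmx z)) *m w).
Proof.
move=> [t [zk [t_gt0 t0 zkz qw]]].
exists t, (fun k => gph_shift G (zk k)); split => //; first exact: att_conv_perturb.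
have quotE k : (t k)^-1 *: (gph_shift G (zk k) - gph_shift G z) =
    col_mx (usubmx ((t k)^-1 *: (zk k - z)))
      (dsubmx ((t k)^-1 *: (zk k - z)) +
       (t k)^-1 *: (G (usubmx (zk k)) - G (usubmx z))).
  rewrite /gph_shift opp_col_mx add_col_mx scale_col_mx.
  by congr col_mx; apply/matrixP => i j; rewrite !mxE; ring.
under eq_cvg do rewrite quotE.
have [_ /(_ (usubmx z))[dGz dGzE] _] := cC2; have [_ zkz' _] := zkz.
rewrite shear_mulmx; apply: cvg_col_mx; first exact: cvg_usubmx.
apply: cvgD; first exact: cvg_dsubmx.
rewrite -dGzE; apply: cvg_diff_quotient => //; first exact: cvg_usubmx.
by under eq_cvg do rewrite -linearB -linearZ /=; exact: cvg_usubmx.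
Qed.

End SumRule.
End Perturbation.

Lemma eq_image_cancel (T : Type) (f g : T -> T) (X Y : set T) :
  cancel g f -> f @` X `<=` Y -> g @` Y `<=` X -> Y = f @` X.
Proof.
move=> gK fXY gYX; apply/seteqP; split=> [y Yy|]; last exact: fXY.
by exists (g y); [apply: gYX; exists y | exact: gK].
Qed.

Lemma polar_mulmx (R : realType) (m : nat) (A : 'M[R]_m) (T : set 'cV[R]_m) :
  A \in unitmx ->
  [set v | forall w, (mulmx A @` T) w -> dotv v w <= 0] =
  mulmx (invmx A^T) @` [set v | forall w, T w -> dotv v w <= 0].
Proof.
move=> uA; have uAt : A^T \in unitmx by rewrite unitmx_tr.
apply: (eq_image_cancel (g := mulmx A^T)).
- by move=> v; rewrite mulmxA mulVmx // mul1mx.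
- move=> _ [v Tv <-] _ [w Tw <-].
  by rewrite dotv_mulmx trmx_inv trmxK mulmxA mulVmx // mul1mx; exact: Tv.
- by move=> _ [v Tv <-] w Tw; rewrite dotv_mulmx trmxK; apply: Tv; exists w.
Qed.

Section PerturbedCones.
Variables (R : realType) (n : nat).
Implicit Types (phi : 'cV[R]_n -> \bar R) (c : 'cV[R]_n -> R)
  (G : 'cV[R]_n -> 'cV[R]_n) (H : 'cV[R]_n -> 'M[R]_n) (K : 'M[R]_n)
  (z : 'cV[R]_(n + n)).

Lemma invmx_shear K : invmx (shear K) = shear (- K).
Proof. by rewrite -[RHS]mul1mx -(mulVmx (shear_unit K)) -mulmxA shearKN mulmx1. Qed.

Lemma att_tangent_perturbE c G H phi z : C2_with c G H ->
  att_tangent (perturb phi c) (gph_shift G z) =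
  mulmx (shear (H (usubmx z))) @` att_tangent phi z.
Proof.
move=> cC2; apply: (eq_image_cancel (g := mulmx (shear (- H (usubmx z))))).
- by move=> w; rewrite mulmxA shearKN mul1mx.
- by move=> _ [w Tw <-]; exact (att_tangent_perturb cC2 Tw).
- move=> _ [w Tw <-]; have := att_tangent_perturb (C2N cC2) Tw.
  by rewrite perturbK gph_shiftK usubmx_gph_shift.
Qed.

Lemma att_rnormal_perturbE c G H phi z : C2_with c G H ->
  att_rnormal (perturb phi c) (gph_shift G z) =
  mulmx (invmx (shear (H (usubmx z)))^T) @` att_rnormal phi z.
Proof.
by move=> cC2; rewrite /att_rnormal (att_tangent_perturbE _ _ cC2) polar_mulmx // shear_unit.
Qed.

Lemma att_normal_perturb c G H phi z v : C2_with c G H -> att_normal phi z v ->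
  att_normal (perturb phi c) (gph_shift G z) (invmx (shear (H (usubmx z)))^T *m v).
Proof.
move=> cC2 [zk [vk [zkz vkv zk_vk]]].
exists (fun k => gph_shift G (zk k)),
  (fun k => invmx (shear (H (usubmx (zk k))))^T *m vk k); split.
- exact (att_conv_perturb cC2 zkz).
- apply: cvg_mulmx => //; rewrite -trmx_inv invmx_shear.
  under eq_cvg do rewrite -trmx_inv invmx_shear.
  have [_ _ cNH] := C2N cC2; have [_ zkz' _] := zkz.
  exact: cvg_trmx (cvg_shear cNH (cvg_usubmx zkz')).
- by move=> k; rewrite (att_rnormal_perturbE _ _ cC2); exists (vk k).
Qed.

Lemma att_normal_perturbE c G H phi z : C2_with c G H ->
  att_normal (perturb phi c) (gph_shift G z) =
  mulmx (invmx (shear (H (usubmx z)))^T) @` att_normal phi z.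
Proof.
move=> cC2; set A := shear (H (usubmx z)).
have uAt : A^T \in unitmx by rewrite unitmx_tr shear_unit.
apply: (eq_image_cancel (g := mulmx A^T)).
- by move=> v; rewrite mulmxA mulVmx // mul1mx.
- by move=> _ [v Nv <-]; exact: att_normal_perturb.
- move=> _ [v Nv <-]; have := att_normal_perturb (C2N cC2) Nv.
  by rewrite perturbK gph_shiftK usubmx_gph_shift -trmx_inv invmx_shear opprK.
Qed.

Lemma O_set_perturb c G H phi z : C2_with c G H ->
  O_set phi z -> O_set (perturb phi c) (gph_shift G z).
Proof.
move=> cC2 [gph_z Tz]; split; first exact (gph_sd_perturb cC2 gph_z).
by rewrite (att_tangent_perturbE _ _ cC2); apply: Znn_mulmx => //; exact: shear_unit.
Qed.

Lemma SC_perturb c G H phi z L : C2_with c G H -> SC phi z L ->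
  SC (perturb phi c) (gph_shift G z) (mulmx (shear (H (usubmx z))) @` L).
Proof.
move=> cC2 [ZL [zk [Ozk zkz dZ0]]]; split; first by apply: Znn_mulmx => //; exact: shear_unit.
exists (fun k => gph_shift G (zk k)); split.
- by move=> k; exact (O_set_perturb cC2 (Ozk k)).
- exact (att_conv_perturb cC2 zkz).
- under eq_cvg do rewrite (att_tangent_perturbE _ _ cC2).
  have [_ _ cH] := cC2; have [_ zkz' _] := zkz.
  apply: dZ_mulmx_cvg0 => //; first by move=> k; case: (Ozk k).
  + by move=> k; exact: shear_unit.
  + exact: shear_unit.
  + exact: cvg_shear cH (cvg_usubmx zkz').
Qed.

Lemma SC_perturbE c G H phi z : C2_with c G H ->
  SC (perturb phi c) (gph_shift G z) =
  (fun L => mulmx (shear (H (usubmx z))) @` L) @` SC phi z.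
Proof.
move=> cC2; apply: (eq_image_cancel (g := fun L => mulmx (shear (- H (usubmx z))) @` L)).
- move=> L; rewrite image_comp; apply: eq_image_id => w _ /=.
  by rewrite mulmxA shearKN mul1mx.
- by move=> _ [L SCL <-]; exact: SC_perturb.
- move=> _ [L SCL <-]; have := SC_perturb (C2N cC2) SCL.
  by rewrite perturbK gph_shiftK usubmx_gph_shift.
Qed.

End PerturbedCones.


Section Symplectic.
Variables (R : realType) (n : nat).

(* [swapneg] is multiplication by the standard symplectic matrix J, so this
   says A^T J A = J. *)
Definition symplectic (A : 'M[R]_(n + n)) : Prop :=
  forall w, A^T *m swapneg (A *m w) = swapneg w.

Lemma shear_symplectic (K : 'M[R]_n) : K^T = K -> symplectic (shear K).
Proof.
move=> sK w; rewrite shear_mulmx /swapneg col_mxKu col_mxKd /shear.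
by rewrite tr_block_mx trmx1 trmx0 sK mul_block_col !mul1mx mul0mx add0r mulmxN addrK.
Qed.

Lemma swapneg_mulmx_inv (A : 'M[R]_(n + n)) (N : set 'cV[R]_(n + n)) :
  A \in unitmx -> symplectic A ->
  [set w | (mulmx (invmx A^T) @` N) (swapneg w)] = mulmx A @` [set w | N (swapneg w)].
Proof.
move=> uA sA; have uAt : A^T \in unitmx by rewrite unitmx_tr.
apply: (eq_image_cancel (g := mulmx (invmx A))).
- by move=> w; rewrite mulmxA mulmxV // mul1mx.
- move=> _ [w Nw <-]; exists (swapneg w) => //.
  by rewrite -[swapneg w](sA w) mulmxA mulVmx // mul1mx.
- move=> _ [w [y Ny yw] <-]; rewrite /= -(sA (invmx A *m w)).
  by rewrite mulmxA mulmxV // mul1mx -yw mulmxA mulmxV // mul1mx.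
Qed.

Lemma adjoint_mulmx (A : 'M[R]_(n + n)) (L : set 'cV[R]_(n + n)) :
  A \in unitmx -> symplectic A -> adjoint (mulmx A @` L) = mulmx A @` adjoint L.
Proof.
move=> uA sA; apply: (eq_image_cancel (g := mulmx (invmx A))).
- by move=> w; rewrite mulmxA mulmxV // mul1mx.
- move=> _ [w Lw <-] _ [v Lv <-].
  by rewrite dotvC dotv_mulmx sA dotvC; exact: Lw.
- move=> _ [w Lw <-] v Lv; rewrite /= -sA mulmxA mulmxV // mul1mx.
  by rewrite dotvC -dotv_mulmx dotvC; apply: Lw; exists v.
Qed.

End Symplectic.

Unset Implicit Arguments.

Theorem proposition3p2 (R : realType) (n : nat)
  (f : 'cV[R]_n -> \bar R) (g : 'cV[R]_n -> R)
  (G : 'cV[R]_n -> 'cV[R]_n) (H : 'cV[R]_n -> 'M[R]_n)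
  (xb xbs : 'cV[R]_n) :
  (forall x, f x != -oo%E) ->
  lim_subdiff f xb xbs ->
  C2_with g G H ->
  let h := fun x => (f x + (g x)%:E)%E in
  let A : 'M[R]_(n + n) := block_mx 1%:M 0 (H xb) 1%:M in
  let zf : 'cV[R]_(n + n) := col_mx xb xbs in
  let zh : 'cV[R]_(n + n) := col_mx xb (xbs + G xb) in
  att_tangent h zh = mulmx A @` att_tangent f zf /\
  att_rnormal h zh = mulmx (invmx A^T) @` att_rnormal f zf /\
  att_normal h zh = mulmx (invmx A^T) @` att_normal f zf /\
  gph_D h zh = mulmx A @` gph_D f zf /\
  gph_rDstar h zh = mulmx A @` gph_rDstar f zf /\
  gph_Dstar h zh = mulmx A @` gph_Dstar f zf /\
  SC h zh = (fun L => mulmx A @` L) @` SC f zf /\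
  SCstar h zh = (fun L => mulmx A @` adjoint L) @` SC f zf.
Proof.
move=> _ _ gC2 h A zf zh.
have zhE : zh = gph_shift G zf by rewrite /gph_shift col_mxKu col_mxKd.
have xbE : usubmx zf = xb by rewrite col_mxKu.
have uA : A \in unitmx := shear_unit (H xb).
have sA : symplectic A := shear_symplectic (hessian_sym gC2 xb).
have eT := att_tangent_perturbE f zf gC2.
have eRN := att_rnormal_perturbE f zf gC2.
have eN := att_normal_perturbE f zf gC2.
have eSC := SC_perturbE f zf gC2.
rewrite -zhE xbE in eT eRN eN eSC.
split; first exact: eT.
split; first exact: eRN.
split; first exact: eN.
split; first exact: eT.
split; first by rewrite /gph_rDstar eRN swapneg_mulmx_inv.
split; first by rewrite /gph_Dstar eN swapneg_mulmx_inv.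
split; first exact: eSC.
rewrite /SCstar eSC image_comp; apply: eq_imagel => L _ /=.
exact: adjoint_mulmx.
Qed.
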